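(* Assume $\Sigma_0=I$, $T>0$, and $R\in M_d(\mathbb{R})$ is a normal matrix satisfying Property (P1). Consider the characteristic equation (with parameter $\lambda\ge0$) $$\lambda\,{\sf C}=F^\top(R-F),\qquad F:=e^{T({\sf C}-{\sf C}^\top)}e^{T{\sf C}^\top}.$$ (i) For $\lambda=0$, a normal matrix ${\sf C}\in M_d(\mathbb{R})$ solves the equation if and only if $e^{T{\sf C}}=R$, i.e. the normal solutions are ${\sf C}=\frac1T L$ where $L\in M_d(\mathbb{R})$ is a (normal) real matrix logarithm of $R$, $e^{L}=R$. (ii) For each such solution ${\sf C}(0)=\frac1T L$ (with $L$ normal, real, $e^L=R$), there exist a neighborhood $\mathcal{N}\subset\mathbb{R}^+$ of $\lambda=0$ and a continuous map $\mathcal{N}\ni\lambda\mapsto{\sf C}(\lambda)\in M_d(\mathbb{R})$ such that ${\sf C}(\lambda)$ is a (normal) solution of the characteristic equation for each $\lambda\in\mathcal N$, ${\sf C}(0)=\frac1TL$, and $${\sf C}(\lambda)=\frac1T L-\frac{\lambda}{T^2}(RR^\top)^{-1}L+O(\lambda^2)\qquad(\lambda\downarrow0).$$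
   Context: Property (P1): the matrix $R\in M_d(\mathbb{R})$ has no eigenvalues in $\mathbb{R}^-=\{x\in\mathbb{R}: x\le 0\}$, and $R$ is non-derogatory (no eigenvalue of $R$ appears in more than one Jordan block). Under (P1) there exist real matrices $L$ with $e^L=R$ (real matrix logarithms, not necessarily unique). $\mathbb{R}^+=\{x\in\mathbb{R}:x\ge0\}$. A real matrix $M$ is normal if $MM^\top=M^\top M$. The characteristic equation above is the case $\Sigma_0=\mathbb{E}[X_0X_0^\top]=I$ of the equation $\lambda{\sf C}=F^\top(R-F)\Sigma_0$ whose solutions parametrize the critical points $A_t=e^{2t\Omega}{\sf C}e^{-2t\Omega}$, $\Omega=\frac12({\sf C}-{\sf C}^\top)$, of the regularized loss ${\sf J}[A]=\mathbb{E}[\frac\lambda2\int_0^T\mathrm{tr}(A_t^\top A_t)dt+\frac12|X_T-Z|^2]$. *)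

From Stdlib Require Import Reals Lra ClassicalEpsilon Factorial.
Open Scope R_scope.

(* A d x d real matrix is represented as a function nat -> nat -> R;
   only the entries with indices < d are meaningful. *)
Definition Mat := nat -> nat -> R.
Definition Vec := nat -> R.

Fixpoint rsum (n : nat) (f : nat -> R) : R :=
  match n with O => 0 | S m => rsum m f + f m end.

Definition meq (d : nat) (A B : Mat) : Prop :=
  forall i j, (i < d)%nat -> (j < d)%nat -> A i j = B i j.

Definition mid : Mat := fun i j => if Nat.eq_dec i j then 1 else 0.
Definition madd (A B : Mat) : Mat := fun i j => A i j + B i j.
Definition mopp (A : Mat) : Mat := fun i j => - A i j.
Definition msub (A B : Mat) : Mat := madd A (mopp B).
Definition mscale (c : R) (A : Mat) : Mat := fun i j => c * A i j.
Definition mtr (A : Mat) : Mat := fun i j => A j i.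
Definition mmul (d : nat) (A B : Mat) : Mat :=
  fun i j => rsum d (fun k => A i k * B k j).

Fixpoint mpow (d : nat) (A : Mat) (n : nat) : Mat :=
  match n with O => mid | S m => mmul d A (mpow d A m) end.

Definition mexp (d : nat) (A : Mat) : Mat := fun i j =>
  epsilon (inhabits 0)
    (fun l => Un_cv (fun N => rsum (S N) (fun k => mpow d A k i j / INR (fact k))) l).

(* matrix inverse (any right inverse; unique when A is invertible) *)
Definition minv (d : nat) (A : Mat) : Mat :=
  epsilon (inhabits mid) (fun B => meq d (mmul d A B) mid).

Definition normal (d : nat) (M : Mat) : Prop :=
  meq d (mmul d M (mtr M)) (mmul d (mtr M) M).

(* Complex eigenpairs of a real matrix, with lambda = a + i b and
   eigenvector w = u + i v (u, v real vectors). *)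
Definition cvec_nonzero (d : nat) (u v : Vec) : Prop :=
  exists i, (i < d)%nat /\ (u i <> 0 \/ v i <> 0).

Definition is_ceigvec (d : nat) (M : Mat) (a b : R) (u v : Vec) : Prop :=
  cvec_nonzero d u v /\
  forall i, (i < d)%nat ->
    rsum d (fun k => M i k * u k) = a * u i - b * v i /\
    rsum d (fun k => M i k * v k) = a * v i + b * u i.

Definition is_ceigenvalue (d : nat) (M : Mat) (a b : R) : Prop :=
  exists u v, is_ceigvec d M a b u v.

(* non-derogatory: every (complex) eigenvalue has a one-dimensional
   (complex) eigenspace, i.e. appears in only one Jordan block:
   any two eigenvectors for the same eigenvalue are C-linearly dependent. *)
Definition non_derogatory (d : nat) (M : Mat) : Prop :=
  forall a b u1 v1 u2 v2,
    is_ceigvec d M a b u1 v1 -> is_ceigvec d M a b u2 v2 ->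
    exists p1 q1 p2 q2 : R,
      (p1 <> 0 \/ q1 <> 0 \/ p2 <> 0 \/ q2 <> 0) /\
      forall i, (i < d)%nat ->
        p1 * u1 i - q1 * v1 i + p2 * u2 i - q2 * v2 i = 0 /\
        p1 * v1 i + q1 * u1 i + p2 * v2 i + q2 * u2 i = 0.

Definition P1 (d : nat) (M : Mat) : Prop :=
  (forall a : R, a <= 0 -> ~ is_ceigenvalue d M a 0) /\ non_derogatory d M.

Definition Fmat (d : nat) (T : R) (C : Mat) : Mat :=
  mmul d (mexp d (mscale T (msub C (mtr C)))) (mexp d (mscale T (mtr C))).

Definition char_eq (d : nat) (T lam : R) (Rm C : Mat) : Prop :=
  meq d (mscale lam C) (mmul d (mtr (Fmat d T C)) (msub Rm (Fmat d T C))).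

From Stdlib Require Import Reals.
Open Scope R_scope.
From Stdlib Require Import Lra Lia Morphisms ClassicalEpsilon Factorial.
From Coquelicot Require Import Coquelicot.

(* For a normal [C] the two exponentials in [F] commute, so [F = e^{TC}]; as [F^T]
   is invertible, [F^T (R - F) = 0] iff [e^{TC} = R], which is (i).

   For (ii) write [C = L/T + X] with [X] in the bicommutant of [{L, L^T}]: a
   commutative algebra of normal matrices, closed under transposition, exponentials
   and limits, which contains [R = e^L].  There [F = R e^{TX}], and the
   characteristic equation becomes the fixed-point equation [X = G_lam X] with
     [G_lam X = T^{-1} (- lam (R R^T)^{-1} e^{-T X^T} (L/T + X) - (e^{TX} - I - TX))].
   For small [lam], [G_lam] is a 1/2-contraction of a small ball of the bicommutant
   (for the entrywise l1 norm), so it has a fixed point [X(lam)], Lipschitz in [lam],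
   with [X(0) = 0] and [X(lam) - G_lam 0 = O(lam^2)], where
   [G_lam 0 = - lam T^{-2} (R R^T)^{-1} L]. *)

Lemma rsum_ext n f g :
  (forall k, (k < n)%nat -> f k = g k) -> rsum n f = rsum n g.
Proof.
  induction n as [|n IH]; intros H; simpl; [reflexivity|].
  rewrite IH by (intros; apply H; lia). rewrite H by lia; reflexivity.
Qed.

Lemma rsum_plus n f g : rsum n (fun k => f k + g k) = rsum n f + rsum n g.
Proof. induction n; simpl; [|rewrite IHn]; ring. Qed.

Lemma rsum_opp n f : rsum n (fun k => - f k) = - rsum n f.
Proof. induction n; simpl; [|rewrite IHn]; ring. Qed.

Lemma rsum_scal_l n c f : rsum n (fun k => c * f k) = c * rsum n f.
Proof. induction n; simpl; [|rewrite IHn]; ring. Qed.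

Lemma rsum_scal_r n c f : rsum n (fun k => f k * c) = rsum n f * c.
Proof. induction n; simpl; [|rewrite IHn]; ring. Qed.

Lemma rsum_const_0 n : rsum n (fun _ => 0) = 0.
Proof. induction n; simpl; [|rewrite IHn]; ring. Qed.

Lemma rsum_comm n m (f : nat -> nat -> R) :
  rsum n (fun i => rsum m (f i)) = rsum m (fun j => rsum n (fun i => f i j)).
Proof.
  induction n; simpl; [now rewrite rsum_const_0|].
  rewrite IHn, <- rsum_plus; reflexivity.
Qed.

Lemma rsum_le n f g :
  (forall k, (k < n)%nat -> f k <= g k) -> rsum n f <= rsum n g.
Proof.
  induction n; intros H; simpl; [lra|].
  apply Rplus_le_compat; [apply IHn; intros; apply H|apply H]; lia.
Qed.

Lemma rsum_nonneg n f : (forall k, (k < n)%nat -> 0 <= f k) -> 0 <= rsum n f.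
Proof. intros H. rewrite <- (rsum_const_0 n). now apply rsum_le. Qed.

Lemma Rabs_rsum n f : Rabs (rsum n f) <= rsum n (fun k => Rabs (f k)).
Proof.
  induction n; simpl; [rewrite Rabs_R0; lra|].
  eapply Rle_trans; [apply Rabs_triang|lra].
Qed.

Lemma rsum_Sl n f : rsum (S n) f = f O + rsum n (fun k => f (S k)).
Proof. induction n; simpl in *; [|rewrite IHn]; ring. Qed.

Lemma rsum_kronecker n i (f : nat -> R) :
  (i < n)%nat -> rsum n (fun k => if Nat.eq_dec i k then f k else 0) = f i.
Proof.
  induction n; intros Hi; [lia|simpl].
  destruct (Nat.eq_dec i n) as [->|Hne].
  - rewrite (rsum_ext _ _ (fun _ => 0)), rsum_const_0; [ring|].
    intros k Hk; destruct (Nat.eq_dec n k); [lia|reflexivity].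
  - rewrite IHn by lia; ring.
Qed.

Lemma le_rsum_term n f i :
  (i < n)%nat -> (forall k, (k < n)%nat -> 0 <= f k) -> f i <= rsum n f.
Proof.
  induction n; intros Hi Hf; [lia|simpl].
  assert (0 <= f n) by (apply Hf; lia).
  destruct (Nat.eq_dec i n) as [->|Hne].
  - assert (0 <= rsum n f) by (apply rsum_nonneg; intros; apply Hf; lia). lra.
  - assert (f i <= rsum n f) by (apply IHn; [lia|intros; apply Hf; lia]). lra.
Qed.

Lemma sum_f_R0_rsum (a : nat -> R) n : sum_f_R0 a n = rsum (S n) a.
Proof. induction n; simpl in *; [|rewrite IHn]; ring. Qed.

Definition mzero : Mat := fun _ _ => 0.

Ltac entrywise := let i := fresh "i" in let j := fresh "j" in
  intros i j ? ?; cbv [madd msub mopp mscale mtr mzero].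

Section MatrixAlgebra.
Variable d : nat.

Global Instance meq_equiv : Equivalence (meq d).
Proof.
  split; intros A; [|intros B H|intros B C H1 H2]; intros i j Hi Hj;
    [reflexivity|symmetry; auto|rewrite H1, H2; auto].
Qed.

Global Instance mmul_proper : Proper (meq d ==> meq d ==> meq d) (mmul d).
Proof.
  intros A A' HA B B' HB i j Hi Hj. apply rsum_ext. intros k Hk. rewrite HA, HB; auto.
Qed.

Global Instance madd_proper : Proper (meq d ==> meq d ==> meq d) madd.
Proof. intros A A' HA B B' HB i j Hi Hj. unfold madd. rewrite HA, HB; auto. Qed.

Global Instance mopp_proper : Proper (meq d ==> meq d) mopp.
Proof. intros A A' HA i j Hi Hj. unfold mopp. rewrite HA; auto. Qed.

Global Instance msub_proper : Proper (meq d ==> meq d ==> meq d) msub.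
Proof. intros A A' HA B B' HB. unfold msub. now rewrite HA, HB. Qed.

Global Instance mscale_proper c : Proper (meq d ==> meq d) (mscale c).
Proof. intros A A' HA i j Hi Hj. unfold mscale. rewrite HA; auto. Qed.

Global Instance mtr_proper : Proper (meq d ==> meq d) mtr.
Proof. intros A A' HA i j Hi Hj. unfold mtr. rewrite HA; auto. Qed.

Global Instance mpow_proper : Proper (meq d ==> eq ==> meq d) (mpow d).
Proof.
  intros A B H n _ <-. induction n; simpl; [reflexivity|]. now apply mmul_proper.
Qed.

Lemma meq_msub_0 A B : meq d (msub A B) mzero <-> meq d A B.
Proof.
  split; intros H i j Hi Hj; specialize (H i j Hi Hj);
    cbv [msub madd mopp mzero] in *; lra.
Qed.

Lemma mmul_assoc A B C : meq d (mmul d (mmul d A B) C) (mmul d A (mmul d B C)).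
Proof.
  intros i j _ _. unfold mmul.
  rewrite (rsum_ext _ _ (fun k => rsum d (fun l => A i l * B l k * C k j))).
  - rewrite rsum_comm. apply rsum_ext. intros l _.
    rewrite <- rsum_scal_l. apply rsum_ext. intros; ring.
  - intros k _. rewrite <- rsum_scal_r. apply rsum_ext. intros; ring.
Qed.

Lemma mmul_1_l A : meq d (mmul d mid A) A.
Proof.
  intros i j Hi _. unfold mmul, mid.
  rewrite <- (rsum_kronecker d i (fun k => A k j) Hi). apply rsum_ext.
  intros k _. destruct (Nat.eq_dec i k); ring.
Qed.

Lemma mmul_1_r A : meq d (mmul d A mid) A.
Proof.
  intros i j _ Hj. unfold mmul, mid.
  rewrite <- (rsum_kronecker d j (fun k => A i k) Hj). apply rsum_ext.
  intros k _. destruct (Nat.eq_dec k j), (Nat.eq_dec j k); subst; try ring; congruence.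
Qed.

Lemma mmul_0_r A : meq d (mmul d A mzero) mzero.
Proof.
  intros i j _ _. unfold mmul, mzero.
  rewrite (rsum_ext _ _ (fun _ => 0)) by (intros; ring). apply rsum_const_0.
Qed.

Lemma mmul_0_l A : meq d (mmul d mzero A) mzero.
Proof.
  intros i j _ _. unfold mmul, mzero.
  rewrite (rsum_ext _ _ (fun _ => 0)) by (intros; ring). apply rsum_const_0.
Qed.

Lemma mmul_madd_distr_r A B C :
  meq d (mmul d (madd A B) C) (madd (mmul d A C) (mmul d B C)).
Proof. intros i j _ _. unfold mmul, madd. rewrite <- rsum_plus. apply rsum_ext; intros; ring. Qed.

Lemma mmul_madd_distr_l A B C :
  meq d (mmul d A (madd B C)) (madd (mmul d A B) (mmul d A C)).
Proof. intros i j _ _. unfold mmul, madd. rewrite <- rsum_plus. apply rsum_ext; intros; ring. Qed.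

Lemma mmul_mopp_l A B : meq d (mmul d (mopp A) B) (mopp (mmul d A B)).
Proof. intros i j _ _. unfold mmul, mopp. rewrite <- rsum_opp. apply rsum_ext; intros; ring. Qed.

Lemma mmul_mopp_r A B : meq d (mmul d A (mopp B)) (mopp (mmul d A B)).
Proof. intros i j _ _. unfold mmul, mopp. rewrite <- rsum_opp. apply rsum_ext; intros; ring. Qed.

Lemma mmul_msub_distr_r A B C :
  meq d (mmul d (msub A B) C) (msub (mmul d A C) (mmul d B C)).
Proof. unfold msub. now rewrite mmul_madd_distr_r, mmul_mopp_l. Qed.

Lemma mmul_msub_distr_l A B C :
  meq d (mmul d A (msub B C)) (msub (mmul d A B) (mmul d A C)).
Proof. unfold msub. now rewrite mmul_madd_distr_l, mmul_mopp_r. Qed.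

Lemma mmul_mscale_l c A B : meq d (mmul d (mscale c A) B) (mscale c (mmul d A B)).
Proof. intros i j _ _. unfold mmul, mscale. rewrite <- rsum_scal_l. apply rsum_ext; intros; ring. Qed.

Lemma mmul_mscale_r c A B : meq d (mmul d A (mscale c B)) (mscale c (mmul d A B)).
Proof. intros i j _ _. unfold mmul, mscale. rewrite <- rsum_scal_l. apply rsum_ext; intros; ring. Qed.

Lemma mtr_mmul A B : meq d (mtr (mmul d A B)) (mmul d (mtr B) (mtr A)).
Proof. intros i j _ _. unfold mtr, mmul. apply rsum_ext; intros; ring. Qed.

Lemma mtr_mid : meq d (mtr mid) mid.
Proof.
  intros i j _ _. unfold mtr, mid.
  destruct (Nat.eq_dec j i), (Nat.eq_dec i j); congruence.
Qed.

Lemma mpow_S_r A n : meq d (mpow d A (S n)) (mmul d (mpow d A n) A).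
Proof.
  induction n; simpl; [now rewrite mmul_1_l, mmul_1_r|].
  simpl in IHn. rewrite IHn at 1. symmetry. apply mmul_assoc.
Qed.

Lemma mtr_mpow A n : meq d (mtr (mpow d A n)) (mpow d (mtr A) n).
Proof.
  induction n; simpl; [apply mtr_mid|].
  rewrite mtr_mmul, IHn, <- mpow_S_r. reflexivity.
Qed.

Definition commute A B := meq d (mmul d A B) (mmul d B A).

Global Instance commute_proper : Proper (meq d ==> meq d ==> iff) commute.
Proof. intros A A' HA B B' HB. unfold commute. now rewrite HA, HB. Qed.

Lemma commute_refl A : commute A A.
Proof. unfold commute. reflexivity. Qed.

Lemma commute_sym A B : commute A B -> commute B A.
Proof. unfold commute. now symmetry. Qed.

Lemma commute_mid_l X : commute mid X.
Proof. unfold commute. now rewrite mmul_1_l, mmul_1_r. Qed.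

Lemma commute_mzero_l X : commute mzero X.
Proof. unfold commute. now rewrite mmul_0_l, mmul_0_r. Qed.

Lemma commute_madd_l A B X : commute A X -> commute B X -> commute (madd A B) X.
Proof. unfold commute. intros H1 H2. now rewrite mmul_madd_distr_l, mmul_madd_distr_r, H1, H2. Qed.

Lemma commute_mopp_l A X : commute A X -> commute (mopp A) X.
Proof. unfold commute. intros H. now rewrite mmul_mopp_l, mmul_mopp_r, H. Qed.

Lemma commute_msub_l A B X : commute A X -> commute B X -> commute (msub A B) X.
Proof. intros. now apply commute_madd_l, commute_mopp_l. Qed.

Lemma commute_mscale_l c A X : commute A X -> commute (mscale c A) X.
Proof. unfold commute. intros H. now rewrite mmul_mscale_l, mmul_mscale_r, H. Qed.

Lemma commute_mmul_l A B X : commute A X -> commute B X -> commute (mmul d A B) X.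
Proof.
  unfold commute. intros H1 H2.
  now rewrite mmul_assoc, H2, <- mmul_assoc, H1, mmul_assoc.
Qed.

Lemma commute_mtr A B : commute A B -> commute (mtr A) (mtr B).
Proof. unfold commute. intros H. now rewrite <- !mtr_mmul, H. Qed.

Lemma commute_mpow_r A B n : commute A B -> commute A (mpow d B n).
Proof.
  intros H. apply commute_sym. induction n; simpl.
  - apply commute_mid_l.
  - apply commute_mmul_l; [apply commute_sym|]; assumption.
Qed.

End MatrixAlgebra.

(** * The entrywise l1 norm *)

Section Norm.
Variable d : nat.

Definition mnorm (A : Mat) : R := rsum d (fun i => rsum d (fun j => Rabs (A i j))).

Global Instance mnorm_proper : Proper (meq d ==> eq) mnorm.
Proof.
  intros A A' H. apply rsum_ext; intros i Hi. apply rsum_ext; intros j Hj. rewrite H; auto.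
Qed.

Lemma mnorm_nonneg A : 0 <= mnorm A.
Proof. apply rsum_nonneg; intros; apply rsum_nonneg; intros; apply Rabs_pos. Qed.

Lemma Rabs_entry_le_mnorm A i j :
  (i < d)%nat -> (j < d)%nat -> Rabs (A i j) <= mnorm A.
Proof.
  intros Hi Hj. eapply Rle_trans;
    [|apply (le_rsum_term _ _ i Hi); intros; apply rsum_nonneg; intros; apply Rabs_pos].
  apply (le_rsum_term _ (fun j => Rabs (A i j)) j Hj). intros; apply Rabs_pos.
Qed.

Lemma mnorm_le_0 A : mnorm A <= 0 -> meq d A mzero.
Proof.
  intros H i j Hi Hj. apply Rabs_eq_0.
  generalize (Rabs_entry_le_mnorm A i j Hi Hj) (Rabs_pos (A i j)). lra.
Qed.

Lemma mnorm_mzero : mnorm mzero = 0.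
Proof.
  unfold mnorm, mzero. rewrite Rabs_R0, !rsum_const_0. reflexivity.
Qed.

Lemma mnorm_mid : mnorm mid = INR d.
Proof.
  unfold mnorm. rewrite (rsum_ext _ _ (fun _ => 1)).
  - clear. induction d as [|n IH]; [reflexivity|]. simpl rsum. rewrite IH, S_INR. ring.
  - intros i Hi. rewrite <- (rsum_kronecker d i (fun _ => 1) Hi). apply rsum_ext.
    intros j _. unfold mid. destruct (Nat.eq_dec i j); [apply Rabs_R1|apply Rabs_R0].
Qed.

Lemma mnorm_madd A B : mnorm (madd A B) <= mnorm A + mnorm B.
Proof.
  unfold mnorm, madd. rewrite <- rsum_plus. apply rsum_le; intros i _.
  rewrite <- rsum_plus. apply rsum_le; intros j _. apply Rabs_triang.
Qed.

Lemma mnorm_mopp A : mnorm (mopp A) = mnorm A.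
Proof. apply rsum_ext; intros; apply rsum_ext; intros; apply Rabs_Ropp. Qed.

Lemma mnorm_msub A B : mnorm (msub A B) <= mnorm A + mnorm B.
Proof. rewrite <- (mnorm_mopp B). apply mnorm_madd. Qed.

Lemma mnorm_msub_sym A B : mnorm (msub A B) = mnorm (msub B A).
Proof. rewrite <- mnorm_mopp. apply mnorm_proper. entrywise. ring. Qed.

Lemma mnorm_msub_triang A B C :
  mnorm (msub A C) <= mnorm (msub A B) + mnorm (msub B C).
Proof.
  rewrite <- mnorm_madd. apply Req_le, mnorm_proper. entrywise. ring.
Qed.

Lemma mnorm_mscale c A : mnorm (mscale c A) = Rabs c * mnorm A.
Proof.
  unfold mnorm, mscale. rewrite <- rsum_scal_l. apply rsum_ext; intros.
  rewrite <- rsum_scal_l. apply rsum_ext; intros. apply Rabs_mult.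
Qed.

Lemma mnorm_mtr A : mnorm (mtr A) = mnorm A.
Proof. apply rsum_comm. Qed.

Lemma mnorm_mmul A B : mnorm (mmul d A B) <= mnorm A * mnorm B.
Proof.
  unfold mnorm, mmul. apply Rle_trans with
    (rsum d (fun i => rsum d (fun j => rsum d (fun k => Rabs (A i k) * Rabs (B k j))))).
  { apply rsum_le; intros; apply rsum_le; intros.
    eapply Rle_trans; [apply Rabs_rsum|]. apply rsum_le; intros. rewrite Rabs_mult; lra. }
  rewrite <- rsum_scal_r. apply rsum_le; intros i _.
  rewrite rsum_comm, <- rsum_scal_r. apply rsum_le; intros k Hk.
  rewrite rsum_scal_l. apply Rmult_le_compat_l; [apply Rabs_pos|].
  apply (le_rsum_term _ (fun k => rsum d (fun j => Rabs (B k j))) k Hk).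
  intros; apply rsum_nonneg; intros; apply Rabs_pos.
Qed.

Lemma mnorm_mpow_S A n : mnorm (mpow d A (S n)) <= mnorm A ^ S n.
Proof.
  induction n; simpl.
  - rewrite mmul_1_r, Rmult_1_r. lra.
  - eapply Rle_trans; [apply mnorm_mmul|].
    apply Rmult_le_compat_l; [apply mnorm_nonneg|exact IHn].
Qed.

Lemma mnorm_mpow A n : mnorm (mpow d A n) <= (INR d + 1) * mnorm A ^ n.
Proof.
  destruct n; simpl.
  - rewrite mnorm_mid. lra.
  - eapply Rle_trans; [apply (mnorm_mpow_S A n)|].
    generalize (pow_le _ (S n) (mnorm_nonneg A)) (pos_INR d); simpl; nra.
Qed.

Lemma is_lim_seq_rsum n (u : nat -> nat -> R) (l : nat -> R) :
  (forall k, (k < n)%nat -> is_lim_seq (fun m => u m k) (l k)) ->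
  is_lim_seq (fun m => rsum n (u m)) (rsum n l).
Proof.
  induction n; intros H; simpl; [apply is_lim_seq_const|].
  apply is_lim_seq_plus'; [apply IHn; intros|]; apply H; lia.
Qed.

Definition mlim (U : nat -> Mat) (V : Mat) :=
  forall i j, (i < d)%nat -> (j < d)%nat -> is_lim_seq (fun m => U m i j) (V i j).

Lemma is_lim_seq_mnorm U V : mlim U V -> is_lim_seq (fun m => mnorm (U m)) (mnorm V).
Proof.
  intros H. apply is_lim_seq_rsum. intros i Hi.
  apply (is_lim_seq_rsum d (fun m j => Rabs (U m i j))). intros j Hj.
  apply (is_lim_seq_abs _ (V i j)). auto.
Qed.

Lemma mnorm_mlim_le U V c : mlim U V -> (forall m, mnorm (U m) <= c) -> mnorm V <= c.
Proof.
  intros Hl Hb. assert (H : Rbar_le (mnorm V) c).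
  { eapply is_lim_seq_le; [|apply is_lim_seq_mnorm, Hl|apply is_lim_seq_const]. auto. }
  exact H.
Qed.

End Norm.

(** * Series and the matrix exponential *)

Lemma is_series_lim_rsum (a : nat -> R) l :
  is_series a l <-> is_lim_seq (fun N => rsum (S N) a) l.
Proof.
  rewrite is_series_Reals, is_lim_seq_Reals. unfold infinite_sum, Un_cv.
  split; intros H eps Heps; destruct (H eps Heps) as [N HN]; exists N;
    intros n Hn; specialize (HN n Hn); rewrite sum_f_R0_rsum in *; assumption.
Qed.

Lemma is_series_finite (a : nat -> R) m :
  (forall n, (m <= n)%nat -> a n = 0) -> is_series a (rsum m a).
Proof.
  intros H. apply is_series_lim_rsum, (is_lim_seq_incr_n _ m).
  eapply is_lim_seq_ext; [|apply is_lim_seq_const]. intros n.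
  induction n as [|n IH].
  - simpl. rewrite (H m) by lia. ring.
  - replace (S n + m)%nat with (S (n + m)) by lia.
    simpl in IH |- *. rewrite IH, (H (S (n + m))) by lia. ring.
Qed.

Lemma is_series_rsum n (a : nat -> nat -> R) l :
  (forall k, (k < n)%nat -> is_series (a k) (l k)) ->
  is_series (fun m => rsum n (fun k => a k m)) (rsum n l).
Proof.
  induction n; intros H; simpl.
  - apply (is_series_finite _ 0). reflexivity.
  - apply (is_series_plus (V := R_NormedModule)); [apply IHn; intros|]; apply H; lia.
Qed.

Lemma is_series_exp x : is_series (fun n => x ^ n / INR (fact n)) (exp x).
Proof.
  generalize (is_exp_Reals x). unfold is_pseries. apply is_series_ext. intros n.
  rewrite pow_n_pow. unfold scal; simpl. unfold mult; simpl. unfold Rdiv. ring.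
Qed.

Lemma rsum_binomial_step (x : nat -> R) n :
  rsum (S (S n)) (fun p => INR (S n) * x p / (INR (fact p) * INR (fact (S n - p)))) =
  rsum (S n) (fun p => x (S p) / (INR (fact p) * INR (fact (n - p)))) +
  rsum (S n) (fun p => x p / (INR (fact p) * INR (fact (n - p)))).
Proof.
  rewrite (rsum_ext _ _ (fun p => INR p * x p / (INR (fact p) * INR (fact (S n - p))) +
    INR (S n - p) * x p / (INR (fact p) * INR (fact (S n - p))))).
  2:{ intros p Hp. rewrite minus_INR by lia. field. split; apply INR_fact_neq_0. }
  rewrite rsum_plus. f_equal.
  - rewrite rsum_Sl. cbv beta. change (INR 0) with 0.
    unfold Rdiv at 1. rewrite !Rmult_0_l, Rplus_0_l.
    apply rsum_ext. intros q Hq. replace (S n - S q)%nat with (n - q)%nat by lia.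
    change (fact (S q)) with (S q * fact q)%nat. rewrite mult_INR. field.
    split; [apply INR_fact_neq_0|split; [apply INR_fact_neq_0|apply not_0_INR; lia]].
  - match goal with |- rsum (S ?m) ?f = _ => change (rsum (S m) f) with (rsum m f + f m) end.
    cbv beta. rewrite Nat.sub_diag. change (INR 0) with 0.
    rewrite Rmult_0_l. unfold Rdiv at 2. rewrite Rmult_0_l, Rplus_0_r. apply rsum_ext. intros p Hp.
    replace (S n - p)%nat with (S (n - p)) by lia.
    change (fact (S (n - p))) with (S (n - p) * fact (n - p))%nat. rewrite mult_INR. field.
    split; [apply INR_fact_neq_0|split; [apply INR_fact_neq_0|apply not_0_INR; lia]].
Qed.

Lemma is_series_tail (a : nat -> R) l m :
  is_series a l -> is_series (fun n => if Nat.ltb n m then 0 else a n) (l - rsum m a).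
Proof.
  intros Ha.
  assert (Hm : is_series (fun n => if Nat.ltb n m then a n else 0) (rsum m a)).
  { rewrite (rsum_ext m a (fun n => if Nat.ltb n m then a n else 0)).
    - apply is_series_finite. intros n Hn. destruct (Nat.ltb_spec n m); [lia|reflexivity].
    - intros k Hk. destruct (Nat.ltb_spec k m); [reflexivity|lia]. }
  eapply is_series_ext; [|apply (is_series_minus _ _ _ _ Ha Hm)].
  intros n. simpl. unfold plus, opp; simpl. destruct (Nat.ltb_spec n m); ring.
Qed.

Section Exponential.
Variable d : nat.

Definition mexp_coef A i j n := mpow d A n i j / INR (fact n).

Lemma Rabs_mexp_coef_le A i j n : (i < d)%nat -> (j < d)%nat ->
  Rabs (mexp_coef A i j n) <= (INR d + 1) * (mnorm d A ^ n / INR (fact n)).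
Proof.
  intros Hi Hj. unfold mexp_coef, Rdiv.
  assert (Hf : 0 < / INR (fact n)) by apply Rinv_0_lt_compat, INR_fact_lt_0.
  rewrite Rabs_mult, (Rabs_pos_eq (/ _)), <- Rmult_assoc by lra.
  apply Rmult_le_compat_r; [lra|].
  eapply Rle_trans; [apply (Rabs_entry_le_mnorm d _ i j Hi Hj)|apply mnorm_mpow].
Qed.

Lemma ex_series_Rabs_mexp_coef A i j : (i < d)%nat -> (j < d)%nat ->
  ex_series (fun n => Rabs (mexp_coef A i j n)).
Proof.
  intros Hi Hj.
  apply (@ex_series_le R_AbsRing R_CompleteNormedModule _
           (fun n => (INR d + 1) * (mnorm d A ^ n / INR (fact n)))).
  - intros n. unfold norm; simpl. unfold abs; simpl. rewrite Rabs_Rabsolu.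
    now apply Rabs_mexp_coef_le.
  - eexists. apply (is_series_scal_l (V := R_NormedModule)), is_series_exp.
Qed.

Lemma is_series_mexp A i j : (i < d)%nat -> (j < d)%nat ->
  is_series (mexp_coef A i j) (mexp d A i j).
Proof.
  intros Hi Hj.
  destruct (ex_series_Rabs _ (ex_series_Rabs_mexp_coef A i j Hi Hj)) as [l Hl].
  assert (Hcv : Un_cv (fun N => rsum (S N) (mexp_coef A i j)) l)
    by (apply is_lim_seq_Reals, is_series_lim_rsum, Hl).
  unfold mexp.
  match goal with |- context [epsilon ?inh ?P] =>
    assert (HP : P (epsilon inh P)) by (apply epsilon_spec; exists l; exact Hcv) end.
  replace (epsilon _ _) with l; [exact Hl|]. exact (UL_sequence _ _ _ Hcv HP).
Qed.

Lemma mexp_unique A i j l : (i < d)%nat -> (j < d)%nat ->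
  is_series (mexp_coef A i j) l -> mexp d A i j = l.
Proof.
  intros Hi Hj Hl. rewrite <- (is_series_unique _ _ Hl).
  symmetry. apply is_series_unique, is_series_mexp; assumption.
Qed.

Global Instance mexp_proper : Proper (meq d ==> meq d) (mexp d).
Proof.
  intros A B H i j Hi Hj. apply mexp_unique; auto.
  eapply is_series_ext; [|apply is_series_mexp; auto]. intros n.
  unfold mexp_coef. rewrite (mpow_proper d A B H n n eq_refl i j Hi Hj). reflexivity.
Qed.

Lemma mexp_mzero : meq d (mexp d mzero) mid.
Proof.
  intros i j Hi Hj. apply mexp_unique; auto.
  replace (mid i j) with (rsum 1 (mexp_coef mzero i j))
    by (unfold mexp_coef; simpl; field).
  apply is_series_finite. intros [|n] Hn; [lia|].
  unfold mexp_coef. simpl. rewrite (mmul_0_l d _ i j Hi Hj). unfold mzero, Rdiv. ring.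
Qed.

Lemma mtr_mexp A : meq d (mtr (mexp d A)) (mexp d (mtr A)).
Proof.
  intros i j Hi Hj. symmetry. apply mexp_unique; auto.
  eapply is_series_ext; [|apply is_series_mexp; auto]. intros n.
  unfold mexp_coef. rewrite <- (mtr_mpow d A n i j Hi Hj). reflexivity.
Qed.

Lemma is_series_mmul_mexp_l X A i j : (i < d)%nat -> (j < d)%nat ->
  is_series (fun n => mmul d X (mpow d A n) i j / INR (fact n)) (mmul d X (mexp d A) i j).
Proof.
  intros Hi Hj. eapply is_series_ext; [|apply is_series_rsum; intros k Hk;
    apply (is_series_scal_l (V := R_NormedModule) (X i k)), is_series_mexp; auto].
  intros n. unfold mmul, mexp_coef, Rdiv. rewrite <- rsum_scal_r.
  apply rsum_ext. intros. unfold scal; simpl; unfold mult; simpl. ring.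
Qed.

Lemma is_series_mmul_mexp_r X A i j : (i < d)%nat -> (j < d)%nat ->
  is_series (fun n => mmul d (mpow d A n) X i j / INR (fact n)) (mmul d (mexp d A) X i j).
Proof.
  intros Hi Hj. eapply is_series_ext; [|apply is_series_rsum; intros k Hk;
    apply (is_series_scal_r (X k j)), is_series_mexp; auto].
  intros n. unfold mmul, mexp_coef, Rdiv. rewrite <- rsum_scal_r.
  apply rsum_ext. intros. ring.
Qed.

Lemma commute_mexp_r X A : commute d X A -> commute d X (mexp d A).
Proof.
  intros H i j Hi Hj.
  rewrite <- (is_series_unique _ _ (is_series_mmul_mexp_l X A i j Hi Hj)).
  apply is_series_unique.
  eapply is_series_ext; [|apply is_series_mmul_mexp_r; auto]. intros n.
  rewrite (commute_mpow_r d X A n H i j Hi Hj). reflexivity.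
Qed.


Definition binomial_term A B n p : Mat :=
  mscale (/ (INR (fact p) * INR (fact (n - p)))) (mmul d (mpow d A p) (mpow d B (n - p))).

Definition binomial_sum A B n : Mat := fun i j => rsum (S n) (fun p => binomial_term A B n p i j).

Lemma mmul_rsum_r X m (F : nat -> Mat) i j :
  mmul d X (fun i j => rsum m (fun p => F p i j)) i j = rsum m (fun p => mmul d X (F p) i j).
Proof.
  unfold mmul. rewrite rsum_comm. apply rsum_ext. intros. now rewrite rsum_scal_l.
Qed.

Lemma binomial_sum_S A B n : commute d A B ->
  meq d (mscale (INR (S n)) (binomial_sum A B (S n))) (mmul d (madd A B) (binomial_sum A B n)).
Proof.
  intros HAB i j Hi Hj.
  assert (HA : forall p q, meq d (mmul d A (mmul d (mpow d A p) (mpow d B q)))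
                                 (mmul d (mpow d A (S p)) (mpow d B q)))
    by (intros; now rewrite <- mmul_assoc).
  assert (HB : forall p q, meq d (mmul d B (mmul d (mpow d A p) (mpow d B q)))
                                 (mmul d (mpow d A p) (mpow d B (S q)))).
  { intros p q.
    assert (Hc : meq d (mmul d B (mpow d A p)) (mmul d (mpow d A p) B))
      by exact (commute_mpow_r d B A p (commute_sym d _ _ HAB)).
    now rewrite <- mmul_assoc, Hc, mmul_assoc. }
  rewrite (mmul_madd_distr_r d A B _ i j Hi Hj). unfold mscale, madd, binomial_sum.
  rewrite !mmul_rsum_r, <- rsum_scal_l.
  rewrite (rsum_ext _ _ (fun p => INR (S n) * mmul d (mpow d A p) (mpow d B (S n - p)) i j
                                  / (INR (fact p) * INR (fact (S n - p))))).
  2:{ intros. unfold binomial_term, mscale, Rdiv. ring. }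
  rewrite rsum_binomial_step. f_equal; apply rsum_ext; intros p Hp;
    unfold binomial_term; rewrite mmul_mscale_r by assumption; unfold mscale, Rdiv.
  - rewrite (HA p (n - p)%nat i j Hi Hj), Nat.sub_succ. ring.
  - rewrite (HB p (n - p)%nat i j Hi Hj), Nat.sub_succ_l by lia. ring.
Qed.

Lemma binomial_sum_mpow A B n : commute d A B ->
  meq d (binomial_sum A B n) (mscale (/ INR (fact n)) (mpow d (madd A B) n)).
Proof.
  intros HAB. induction n as [|n IH]; intros i j Hi Hj.
  - unfold binomial_sum, binomial_term, mscale. simpl.
    rewrite (mmul_1_l d mid i j Hi Hj). field.
  - assert (Hn : INR (S n) <> 0) by (apply not_0_INR; lia).
    apply (Rmult_eq_reg_l (INR (S n))); [|exact Hn].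
    change (INR (S n) * binomial_sum A B (S n) i j)
      with (mscale (INR (S n)) (binomial_sum A B (S n)) i j).
    rewrite (binomial_sum_S A B n HAB i j Hi Hj), (mmul_proper d _ _ (reflexivity _) _ _ IH i j Hi Hj).
    rewrite (mmul_mscale_r d _ _ _ i j Hi Hj). unfold mscale. simpl mpow.
    change (fact (S n)) with (S n * fact n)%nat. rewrite mult_INR.
    field. split; [apply INR_fact_neq_0|exact Hn].
Qed.

Lemma mexp_madd A B : commute d A B ->
  meq d (mmul d (mexp d A) (mexp d B)) (mexp d (madd A B)).
Proof.
  intros HAB i j Hi Hj. symmetry. apply mexp_unique; auto.
  eapply is_series_ext; [|apply is_series_rsum; intros k Hk;
    apply (is_series_mult _ _ _ _ (is_series_mexp A i k Hi Hk) (is_series_mexp B k j Hk Hj));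
    apply ex_series_Rabs_mexp_coef; assumption].
  intros n. cbv beta.
  transitivity (binomial_sum A B n i j).
  - unfold binomial_sum, binomial_term, mmul, mscale.
    rewrite (rsum_ext d _ (fun k => rsum (S n) (fun p => mexp_coef A i k p * mexp_coef B k j (n - p))))
      by (intros; apply sum_f_R0_rsum).
    rewrite rsum_comm. apply rsum_ext. intros p Hp. rewrite <- rsum_scal_l.
    apply rsum_ext. intros k Hk. unfold mexp_coef. field. split; apply INR_fact_neq_0.
  - rewrite (binomial_sum_mpow A B n HAB i j Hi Hj). apply Rmult_comm.
Qed.

Lemma mexp_mopp_l A : meq d (mmul d (mexp d (mopp A)) (mexp d A)) mid.
Proof.
  rewrite mexp_madd by apply commute_mopp_l, commute_refl.
  rewrite <- mexp_mzero. apply mexp_proper. entrywise. ring.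
Qed.

Lemma mexp_mopp_r A : meq d (mmul d (mexp d A) (mexp d (mopp A))) mid.
Proof.
  rewrite mexp_madd by apply commute_sym, commute_mopp_l, commute_refl.
  rewrite <- mexp_mzero. apply mexp_proper. entrywise. ring.
Qed.

End Exponential.

Section ExponentialBounds.
Variable d : nat.

Lemma mnorm_le_series (V : Mat) (c : nat -> nat -> nat -> R) (q : nat -> R) (Q : R) :
  (forall i j, (i < d)%nat -> (j < d)%nat -> is_series (c i j) (V i j)) ->
  (forall n, rsum d (fun i => rsum d (fun j => Rabs (c i j n))) <= q n) ->
  is_series q Q -> mnorm d V <= Q.
Proof.
  intros Hc Hb Hq. apply is_series_lim_rsum in Hq.
  assert (HV : mlim d (fun N i j => rsum (S N) (c i j)) V)
    by (intros i j Hi Hj; apply is_series_lim_rsum, Hc; assumption).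
  assert (H : Rbar_le (mnorm d V) Q).
  { eapply is_lim_seq_le; [|apply (is_lim_seq_mnorm d _ _ HV)|apply Hq].
    intros N. unfold mnorm. eapply Rle_trans.
    - apply rsum_le; intros i _; apply rsum_le; intros j _; apply Rabs_rsum.
    - eapply Rle_trans; [|apply rsum_le; intros n _; apply Hb].
      rewrite (rsum_comm (S N) d). apply rsum_le. intros i _.
      rewrite (rsum_comm (S N) d). lra. }
  exact H.
Qed.

Lemma mnorm_mexp_tail A m : (1 <= m)%nat ->
  mnorm d (msub (mexp d A) (fun i j => rsum m (mexp_coef d A i j)))
  <= exp (mnorm d A) - rsum m (fun k => mnorm d A ^ k / INR (fact k)).
Proof.
  intros Hm.
  apply (mnorm_le_series _ (fun i j n => if Nat.ltb n m then 0 else mexp_coef d A i j n)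
           (fun n => if Nat.ltb n m then 0 else mnorm d A ^ n / INR (fact n))).
  - intros i j Hi Hj. apply is_series_tail, is_series_mexp; assumption.
  - intros n. destruct (Nat.ltb_spec n m) as [Hn|Hn].
    + rewrite Rabs_R0, !rsum_const_0. lra.
    + destruct n as [|n]; [lia|]. unfold mexp_coef, Rdiv.
      assert (Hf : 0 < / INR (fact (S n))) by apply Rinv_0_lt_compat, INR_fact_lt_0.
      rewrite (rsum_ext _ _ (fun i => rsum d (fun j => Rabs (mpow d A (S n) i j)) * / INR (fact (S n)))).
      * rewrite rsum_scal_r. apply Rmult_le_compat_r; [lra|apply mnorm_mpow_S].
      * intros i _. rewrite <- rsum_scal_r. apply rsum_ext. intros j _.
        rewrite Rabs_mult, (Rabs_pos_eq (/ _)) by lra. reflexivity.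
  - apply is_series_tail, is_series_exp.
Qed.

Lemma mnorm_mexp_sub_mid A : mnorm d (msub (mexp d A) mid) <= exp (mnorm d A) - 1.
Proof.
  replace (exp (mnorm d A) - 1) with (exp (mnorm d A) - rsum 1 (fun k => mnorm d A ^ k / INR (fact k)))
    by (simpl; field).
  rewrite <- (mnorm_mexp_tail A 1) by lia.
  apply Req_le, mnorm_proper, msub_proper; [reflexivity|].
  intros i j _ _. unfold mexp_coef. simpl. field.
Qed.

Lemma mnorm_mexp_sub_mid_sub A :
  mnorm d (msub (msub (mexp d A) mid) A) <= exp (mnorm d A) - 1 - mnorm d A.
Proof.
  replace (exp (mnorm d A) - 1 - mnorm d A)
    with (exp (mnorm d A) - rsum 2 (fun k => mnorm d A ^ k / INR (fact k))) by (simpl; field).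
  rewrite <- (mnorm_mexp_tail A 2) by lia.
  apply Req_le, mnorm_proper. intros i j Hi Hj. unfold mexp_coef. simpl.
  cbv [msub madd mopp]. rewrite (mmul_1_r d A i j Hi Hj). field.
Qed.

Lemma mnorm_mexp A : mnorm d (mexp d A) <= INR d + exp (mnorm d A) - 1.
Proof.
  assert (E : meq d (mexp d A) (madd mid (msub (mexp d A) mid))) by (entrywise; ring).
  rewrite E, <- mnorm_mid.
  generalize (mnorm_madd d mid (msub (mexp d A) mid)) (mnorm_mexp_sub_mid A). lra.
Qed.

End ExponentialBounds.

Lemma exp_le x y : x <= y -> exp x <= exp y.
Proof. intros [H|H]; [left; apply exp_increasing, H|right; now rewrite H]. Qed.

Lemma exp_ge_1 x : 0 <= x -> 1 <= exp x.
Proof. intros H. rewrite <- exp_0. apply exp_le, H. Qed.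

Lemma exp_sub_1_le x : 0 <= x -> exp x - 1 <= x * exp x.
Proof.
  intros Hx. generalize (exp_ineq1_le (- x)) (exp_pos x). intros H1 Hpos.
  assert (Hinv : exp (- x) * exp x = 1) by (rewrite <- exp_plus, Rplus_opp_l; apply exp_0).
  nra.
Qed.

Lemma exp_sub_1_sub_le x : 0 <= x -> exp x - 1 - x <= x ^ 2 * exp x.
Proof. intros Hx. generalize (exp_sub_1_le x Hx) (exp_ge_1 x Hx). nra. Qed.

Section ExponentialLipschitz.
Variable d : nat.

Definition exp_rem (A : Mat) : Mat := msub (msub (mexp d A) mid) A.

Lemma mexp_msub_factor A B : commute d A B ->
  meq d (msub (mexp d A) (mexp d B)) (mmul d (mexp d B) (msub (mexp d (msub A B)) mid)).
Proof.
  intros H. rewrite mmul_msub_distr_l, mmul_1_r, mexp_madd.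
  - apply msub_proper; [|reflexivity]. apply mexp_proper. entrywise. ring.
  - apply commute_sym, commute_msub_l; [exact H|apply commute_refl].
Qed.

Lemma mnorm_mexp_msub A B : commute d A B ->
  mnorm d (msub (mexp d A) (mexp d B)) <= mnorm d (mexp d B) * (exp (mnorm d (msub A B)) - 1).
Proof.
  intros H. rewrite (mexp_msub_factor A B H). eapply Rle_trans; [apply mnorm_mmul|].
  apply Rmult_le_compat_l; [apply mnorm_nonneg|apply mnorm_mexp_sub_mid].
Qed.

Lemma exp_rem_msub_factor A B : commute d A B ->
  meq d (msub (exp_rem A) (exp_rem B))
        (madd (mmul d (msub (mexp d B) mid) (msub (mexp d (msub A B)) mid))
              (exp_rem (msub A B))).
Proof.
  intros HAB.
  assert (HE : meq d (mexp d A) (mmul d (mexp d B) (mexp d (msub A B)))).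
  { rewrite mexp_madd; [apply mexp_proper; entrywise; ring|].
    apply commute_sym, commute_msub_l; [exact HAB|apply commute_refl]. }
  unfold exp_rem. rewrite mmul_msub_distr_r, !mmul_msub_distr_l, mmul_1_l, mmul_1_r, mmul_1_l.
  set (D := msub A B) in *. intros i j Hi Hj. cbv [madd msub mopp].
  rewrite (HE i j Hi Hj). unfold D. cbv [madd msub mopp]. ring.
Qed.

Lemma mnorm_exp_rem_msub A B : commute d A B ->
  mnorm d (msub (exp_rem A) (exp_rem B)) <=
  mnorm d (msub A B) * (mnorm d B + mnorm d (msub A B)) * exp (mnorm d B + mnorm d (msub A B)).
Proof.
  intros HAB. rewrite (exp_rem_msub_factor A B HAB).
  set (b := mnorm d B). set (h := mnorm d (msub A B)).
  assert (Hb : 0 <= b) by apply mnorm_nonneg. assert (Hh : 0 <= h) by apply mnorm_nonneg.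
  assert (H1 : mnorm d (mmul d (msub (mexp d B) mid) (msub (mexp d (msub A B)) mid))
               <= b * exp b * (h * exp h)).
  { eapply Rle_trans; [apply mnorm_mmul|].
    apply Rmult_le_compat; try apply mnorm_nonneg.
    - eapply Rle_trans; [apply mnorm_mexp_sub_mid|apply exp_sub_1_le, Hb].
    - eapply Rle_trans; [apply mnorm_mexp_sub_mid|apply exp_sub_1_le, Hh]. }
  assert (H2 : mnorm d (exp_rem (msub A B)) <= h ^ 2 * exp h)
    by (eapply Rle_trans; [apply mnorm_mexp_sub_mid_sub|apply exp_sub_1_sub_le, Hh]).
  eapply Rle_trans; [apply mnorm_madd|]. rewrite exp_plus.
  generalize (exp_ge_1 b Hb) (exp_ge_1 h Hh). intros.
  assert (0 <= h ^ 2 * exp h) by (apply Rmult_le_pos; nra).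
  assert (0 <= b * exp b * h * exp h) by (repeat apply Rmult_le_pos; lra).
  nra.
Qed.

End ExponentialLipschitz.

(** * The bicommutant of a normal matrix *)

Section Bicommutant.
Variable d : nat.
Variable L : Mat.

Definition bicommutant (X : Mat) : Prop :=
  forall Y, commute d Y L -> commute d Y (mtr L) -> commute d Y X.

Global Instance bicommutant_proper : Proper (meq d ==> iff) bicommutant.
Proof.
  intros X X' H. unfold bicommutant.
  split; intros HX Y H1 H2; [rewrite <- H|rewrite H]; auto.
Qed.

Lemma bicommutant_self : bicommutant L.
Proof. intros Y H _. exact H. Qed.

Lemma bicommutant_mtr_self : bicommutant (mtr L).
Proof. intros Y _ H. exact H. Qed.

Lemma bicommutant_mid : bicommutant mid.
Proof. intros Y _ _. apply commute_sym, commute_mid_l. Qed.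

Lemma bicommutant_mzero : bicommutant mzero.
Proof. intros Y _ _. apply commute_sym, commute_mzero_l. Qed.

Lemma bicommutant_madd X Y : bicommutant X -> bicommutant Y -> bicommutant (madd X Y).
Proof. intros HX HY Z H1 H2. apply commute_sym, commute_madd_l; apply commute_sym; auto. Qed.

Lemma bicommutant_mopp X : bicommutant X -> bicommutant (mopp X).
Proof. intros HX Z H1 H2. apply commute_sym, commute_mopp_l, commute_sym; auto. Qed.

Lemma bicommutant_msub X Y : bicommutant X -> bicommutant Y -> bicommutant (msub X Y).
Proof. intros. apply bicommutant_madd, bicommutant_mopp; assumption. Qed.

Lemma bicommutant_mscale c X : bicommutant X -> bicommutant (mscale c X).
Proof. intros HX Z H1 H2. apply commute_sym, commute_mscale_l, commute_sym; auto. Qed.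

Lemma bicommutant_mmul X Y : bicommutant X -> bicommutant Y -> bicommutant (mmul d X Y).
Proof. intros HX HY Z H1 H2. apply commute_sym, commute_mmul_l; apply commute_sym; auto. Qed.

Lemma bicommutant_mexp X : bicommutant X -> bicommutant (mexp d X).
Proof. intros HX Z H1 H2. apply commute_mexp_r; auto. Qed.

Lemma bicommutant_mtr X : bicommutant X -> bicommutant (mtr X).
Proof.
  intros HX Z H1 H2.
  assert (Hmtr : forall A, meq d (mtr (mtr A)) A) by (intros A i j _ _; reflexivity).
  assert (HZ : commute d (mtr Z) X).
  { apply HX; [rewrite <- (Hmtr L)|]; apply commute_mtr; assumption. }
  rewrite <- (Hmtr Z). apply commute_mtr, HZ.
Qed.

Lemma bicommutant_mlim (Xs : nat -> Mat) X :
  (forall n, bicommutant (Xs n)) -> mlim d Xs X -> bicommutant X.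
Proof.
  intros HS Hl Y H1 H2 i j Hi Hj.
  assert (Hr : is_lim_seq (fun n => mmul d Y (Xs n) i j) (mmul d Y X i j)).
  { apply is_lim_seq_rsum. intros k Hk.
    apply (is_lim_seq_scal_l _ (Y i k) (X k j)), Hl; assumption. }
  assert (Hl' : is_lim_seq (fun n => mmul d Y (Xs n) i j) (mmul d X Y i j)).
  { eapply is_lim_seq_ext; [intros n; symmetry; apply (HS n Y H1 H2 i j Hi Hj)|].
    apply is_lim_seq_rsum. intros k Hk.
    eapply is_lim_seq_ext; [intros n; apply Rmult_comm|].
    rewrite Rmult_comm. apply (is_lim_seq_scal_l _ (Y k j) (X i k)), Hl; assumption. }
  apply is_lim_seq_unique in Hr, Hl'. rewrite Hr in Hl'. now injection Hl'.
Qed.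

Hypothesis HL : normal d L.

Lemma bicommutant_commute X Y : bicommutant X -> bicommutant Y -> commute d X Y.
Proof.
  intros HX HY. apply HY; apply commute_sym, HX.
  - apply commute_refl.
  - exact HL.
  - apply commute_sym, HL.
  - apply commute_refl.
Qed.

Lemma bicommutant_normal X : bicommutant X -> normal d X.
Proof. intros HX. apply bicommutant_commute, bicommutant_mtr; assumption. Qed.

End Bicommutant.

(** * Contractions *)

Lemma limit1_in_lipschitz (f : R -> R) (D : R -> Prop) K x :
  0 <= K -> (forall y, D y -> Rabs (f y - f x) <= K * Rabs (y - x)) ->
  limit1_in f D (f x) x.
Proof.
  intros HK Hf eps Heps. exists (eps / (K + 1)). split; [apply Rdiv_lt_0_compat; lra|].
  intros y [Dy Hy]. simpl in *. unfold R_dist in *. eapply Rle_lt_trans; [apply Hf, Dy|].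
  apply Rle_lt_trans with (K * (eps / (K + 1))); [apply Rmult_le_compat_l; lra|].
  apply Rmult_lt_reg_r with (K + 1); [lra|]. field_simplify; lra.
Qed.

Lemma half_pow_lt c eps : 0 < eps -> exists N, forall n, (N <= n)%nat -> c * (/ 2) ^ n < eps.
Proof.
  intros Heps. set (c' := Rabs c + 1).
  assert (Hc' : 0 < c') by (unfold c'; generalize (Rabs_pos c); lra).
  destruct (pow_lt_1_zero (/ 2) ltac:(rewrite Rabs_pos_eq; lra) (eps / c')
              ltac:(apply Rdiv_lt_0_compat; lra)) as [N HN].
  exists N. intros n Hn. specialize (HN n Hn).
  assert (Hp : 0 <= (/ 2) ^ n) by (apply pow_le; lra).
  rewrite Rabs_pos_eq in HN by exact Hp.
  apply Rmult_lt_compat_l with (r := c') in HN; [|exact Hc'].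
  replace (c' * (eps / c')) with eps in HN by (field; lra).
  assert (c * (/ 2) ^ n <= c' * (/ 2) ^ n)
    by (apply Rmult_le_compat_r; [exact Hp|unfold c'; generalize (Rle_abs c); lra]).
  lra.
Qed.

Lemma le_half_pow_le_0 x c : (forall n, x <= c * (/ 2) ^ n) -> x <= 0.
Proof.
  intros H. destruct (Rle_lt_dec x 0) as [Hx|Hx]; [exact Hx|].
  destruct (half_pow_lt c x Hx) as [N HN]. specialize (HN N (le_n N)). specialize (H N). lra.
Qed.

Lemma fixpoint_perturbation d (g h : Mat -> Mat) x y :
  meq d (g x) x -> meq d (h y) y ->
  mnorm d (msub (g x) (g y)) <= / 2 * mnorm d (msub x y) ->
  mnorm d (msub x y) <= 2 * mnorm d (msub (g y) (h y)).
Proof.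
  intros Hx Hy Hg.
  assert (E : mnorm d (msub x y) = mnorm d (msub (g x) (h y))) by now rewrite Hx, Hy.
  generalize (mnorm_msub_triang d (g x) (g y) (h y)). lra.
Qed.

Section Contraction.
Variable d : nat.
Variable Inv : Mat -> Prop.
Hypothesis Inv_mlim : forall Xs X, (forall n, Inv (Xs n)) -> mlim d Xs X -> Inv X.
Variable r : R.
Let ball X := Inv X /\ mnorm d X <= r.
Hypothesis ball_mzero : ball mzero.
Variable g : Mat -> Mat.
Hypothesis ball_g : forall X, ball X -> ball (g X).
Hypothesis g_contraction : forall X Y, ball X -> ball Y ->
  mnorm d (msub (g X) (g Y)) <= / 2 * mnorm d (msub X Y).

Let x n := Nat.iter n g mzero.

Definition fixpoint : Mat := fun i j => real (Lim_seq (fun n => Nat.iter n g mzero i j)).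

Lemma ball_iter n : ball (x n).
Proof. induction n; [exact ball_mzero|apply ball_g, IHn]. Qed.

Lemma mnorm_iter_step n : mnorm d (msub (x (S n)) (x n)) <= (/ 2) ^ n * r.
Proof.
  induction n as [|n IH].
  - replace (mnorm d (msub (x 1) (x 0))) with (mnorm d (g mzero)).
    + rewrite Rmult_1_l. apply ball_g, ball_mzero.
    + apply mnorm_proper. unfold x; simpl. entrywise. ring.
  - eapply Rle_trans; [apply (g_contraction (x (S n)) (x n)); apply ball_iter|].
    replace ((/ 2) ^ S n * r) with (/ 2 * ((/ 2) ^ n * r)) by (simpl; ring). lra.
Qed.

Lemma mnorm_iter_cauchy m n : (n <= m)%nat -> mnorm d (msub (x m) (x n)) <= 2 * r * (/ 2) ^ n.
Proof.
  intros Hnm. replace m with ((m - n) + n)%nat by lia.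
  assert (Htel : forall k, mnorm d (msub (x (k + n)) (x n)) <= 2 * r * (/ 2) ^ n - 2 * r * (/ 2) ^ (k + n)).
  { induction k as [|k IH].
    - change (0 + n)%nat with n. replace (mnorm d (msub (x n) (x n))) with 0; [lra|].
      rewrite <- (mnorm_mzero d). apply mnorm_proper. entrywise. ring.
    - eapply Rle_trans; [apply (mnorm_msub_triang d _ (x (k + n)))|].
      change (S k + n)%nat with (S (k + n)). change ((/ 2) ^ S (k + n)) with (/ 2 * (/ 2) ^ (k + n)).
      generalize (mnorm_iter_step (k + n)). lra. }
  eapply Rle_trans; [apply Htel|].
  assert (0 <= r) by (generalize (mnorm_nonneg d mzero); unfold ball in *; lra).
  generalize (pow_le (/ 2) (m - n + n) ltac:(lra)). nra.
Qed.

Lemma is_lim_iter : mlim d x fixpoint.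
Proof.
  intros i j Hi Hj. apply Lim_seq_correct', ex_lim_seq_cauchy_corr. intros eps.
  destruct (half_pow_lt (2 * r) eps (cond_pos eps)) as [N HN]. exists N.
  assert (Hb : forall p q, (N <= p)%nat -> (p <= q)%nat -> Rabs (x q i j - x p i j) < eps).
  { intros p q Hp Hq. eapply Rle_lt_trans; [apply (Rabs_entry_le_mnorm d (msub (x q) (x p)) i j Hi Hj)|].
    eapply Rle_lt_trans; [apply mnorm_iter_cauchy, Hq|apply HN, Hp]. }
  intros n m Hn Hm. destruct (Compare_dec.le_lt_dec n m).
  - rewrite Rabs_minus_sym. apply Hb; assumption.
  - apply Hb; [|lia]; assumption.
Qed.

Lemma ball_fixpoint : Inv fixpoint /\ mnorm d fixpoint <= r.
Proof.
  split.
  - apply (Inv_mlim x); [intros n; apply ball_iter|apply is_lim_iter].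
  - apply (mnorm_mlim_le d x); [apply is_lim_iter|intros n; apply ball_iter].
Qed.

Lemma mnorm_iter_fixpoint n : mnorm d (msub (x n) fixpoint) <= 2 * r * (/ 2) ^ n.
Proof.
  apply (mnorm_mlim_le d (fun m => msub (x n) (x (m + n)))).
  - intros i j Hi Hj. apply is_lim_seq_plus'; [apply is_lim_seq_const|].
    apply (is_lim_seq_opp _ (fixpoint i j)), (is_lim_seq_incr_n (fun m => x m i j) n).
    apply is_lim_iter; assumption.
  - intros m. rewrite mnorm_msub_sym. apply mnorm_iter_cauchy. lia.
Qed.

Lemma fixpoint_eq : meq d (g fixpoint) fixpoint.
Proof.
  apply meq_msub_0, mnorm_le_0, (le_half_pow_le_0 _ (2 * r)). intros n.
  eapply Rle_trans; [apply (mnorm_msub_triang d _ (x (S n)))|].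
  assert (H1 : mnorm d (msub (g fixpoint) (g (x n))) <= / 2 * mnorm d (msub fixpoint (x n)))
    by (apply g_contraction; [apply ball_fixpoint|apply ball_iter]).
  rewrite (mnorm_msub_sym d fixpoint) in H1. change (x (S n)) with (g (x n)) at 1.
  generalize (mnorm_iter_fixpoint n) (mnorm_iter_fixpoint (S n)).
  change ((/ 2) ^ S n) with (/ 2 * (/ 2) ^ n). lra.
Qed.

End Contraction.

(** * The characteristic equation *)

Lemma Fmat_normal d T C : normal d C -> meq d (Fmat d T C) (mexp d (mscale T C)).
Proof.
  intros HC. unfold Fmat. rewrite mexp_madd.
  - apply mexp_proper. entrywise. ring.
  - apply commute_mscale_l, commute_sym, commute_mscale_l, commute_sym.
    apply commute_msub_l; [exact HC|apply commute_refl].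
Qed.

Lemma char_eq_0_iff d T Rm C : normal d C ->
  (char_eq d T 0 Rm C <-> meq d (mexp d (mscale T C)) Rm).
Proof.
  intros HC. unfold char_eq. rewrite (Fmat_normal d T C HC), (mtr_mexp d (mscale T C)).
  set (F := mexp d (mscale T C)). set (Ft := mexp d (mtr (mscale T C))).
  assert (Hs : meq d (mscale 0 C) mzero) by (entrywise; ring).
  rewrite Hs. split; intros H.
  - symmetry. apply meq_msub_0.
    assert (HFt : meq d (mmul d (mexp d (mopp (mtr (mscale T C)))) Ft) mid) by apply mexp_mopp_l.
    rewrite <- (mmul_1_l d (msub Rm F)), <- HFt, mmul_assoc, <- H. apply mmul_0_r.
  - rewrite H. symmetry. rewrite (proj2 (meq_msub_0 d Rm Rm) (reflexivity _)). apply mmul_0_r.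
Qed.

Section CharacteristicMap.
Variable d : nat.
Variables (L : Mat) (T : R) (Rm : Mat).
Hypothesis HL : normal d L.
Hypothesis HT : 0 < T.
Hypothesis HR : meq d (mexp d L) Rm.

Definition gram_inv : Mat := mmul d (mexp d (mopp (mtr L))) (mexp d (mopp L)).

Lemma mtr_Rm : meq d (mtr Rm) (mexp d (mtr L)).
Proof. rewrite <- HR. apply mtr_mexp. Qed.

Lemma gram_mmul_gram_inv : meq d (mmul d (mmul d Rm (mtr Rm)) gram_inv) mid.
Proof.
  unfold gram_inv. rewrite mtr_Rm, <- HR, mmul_assoc, <- (mmul_assoc d (mexp d (mtr L))).
  now rewrite mexp_mopp_r, mmul_1_l, mexp_mopp_r.
Qed.

Lemma gram_inv_mmul_gram : meq d (mmul d gram_inv (mmul d Rm (mtr Rm))) mid.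
Proof.
  unfold gram_inv. rewrite mtr_Rm, <- HR, mmul_assoc, <- (mmul_assoc d (mexp d (mopp L))).
  now rewrite mexp_mopp_l, mmul_1_l, mexp_mopp_l.
Qed.

Lemma minv_gram : meq d (minv d (mmul d Rm (mtr Rm))) gram_inv.
Proof.
  unfold minv.
  match goal with |- meq d (epsilon ?inh ?P) _ =>
    assert (HP : P (epsilon inh P))
      by (apply epsilon_spec; exists gram_inv; exact gram_mmul_gram_inv) end.
  set (B := epsilon _ _) in *.
  rewrite <- (mmul_1_l d B), <- gram_inv_mmul_gram, mmul_assoc, HP. apply mmul_1_r.
Qed.

Definition C_of (X : Mat) : Mat := madd (mscale (/ T) L) X.

Definition psi (X : Mat) : Mat := mmul d (mexp d (mscale (- T) (mtr X))) (C_of X).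

Definition char_map (lam : R) (X : Mat) : Mat :=
  mscale (/ T) (msub (mscale (- lam) (mmul d gram_inv (psi X))) (exp_rem d (mscale T X))).

Lemma bicommutant_Rm : bicommutant d L Rm.
Proof. rewrite <- HR. apply bicommutant_mexp, bicommutant_self. Qed.

Lemma bicommutant_gram_inv : bicommutant d L gram_inv.
Proof.
  apply bicommutant_mmul; apply bicommutant_mexp, bicommutant_mopp;
    [apply bicommutant_mtr_self|apply bicommutant_self].
Qed.

Lemma bicommutant_C_of X : bicommutant d L X -> bicommutant d L (C_of X).
Proof. intros H. apply bicommutant_madd; [apply bicommutant_mscale, bicommutant_self|exact H]. Qed.

Lemma bicommutant_char_map lam X : bicommutant d L X -> bicommutant d L (char_map lam X).
Proof.
  intros H. apply bicommutant_mscale, bicommutant_msub.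
  - apply bicommutant_mscale, bicommutant_mmul; [apply bicommutant_gram_inv|].
    apply bicommutant_mmul; [|apply bicommutant_C_of, H].
    apply bicommutant_mexp, bicommutant_mscale, bicommutant_mtr, H.
  - unfold exp_rem. apply bicommutant_msub; [apply bicommutant_msub|].
    + apply bicommutant_mexp, bicommutant_mscale, H.
    + apply bicommutant_mid.
    + apply bicommutant_mscale, H.
Qed.

Lemma char_eq_of_fixpoint lam X : bicommutant d L X -> meq d (char_map lam X) X ->
  char_eq d T lam Rm (C_of X).
Proof.
  intros HX Hfix. set (E := mexp d (mscale T X)).
  assert (Hf : meq d (msub E mid) (mscale (- lam) (mmul d gram_inv (psi X)))).
  { intros i j Hi Hj. specialize (Hfix i j Hi Hj).
    unfold char_map, exp_rem in Hfix. cbv [mscale msub madd mopp] in Hfix |- *. fold E in Hfix.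
    apply (Rmult_eq_compat_l T) in Hfix. field_simplify in Hfix; [|lra].
    change (mexp d (fun i j : nat => T * X i j) i j) with (E i j) in Hfix. lra. }
  assert (HC := bicommutant_C_of X HX).
  unfold char_eq. rewrite (Fmat_normal d T _ (bicommutant_normal d L HL _ HC)).
  assert (HF : meq d (mexp d (mscale T (C_of X))) (mmul d Rm E)).
  { rewrite <- HR. unfold E. rewrite mexp_madd.
    - apply mexp_proper. unfold C_of. entrywise. field. lra.
    - apply (bicommutant_commute d L HL); [apply bicommutant_self|apply bicommutant_mscale, HX]. }
  rewrite HF, mtr_mmul.
  assert (H1 : meq d (msub Rm (mmul d Rm E)) (mmul d Rm (mscale (-1) (msub E mid)))).
  { rewrite mmul_mscale_r, mmul_msub_distr_l, mmul_1_r. entrywise. ring. }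
  rewrite H1, Hf, !mmul_mscale_r.
  assert (H2 : meq d (mmul d (mmul d (mtr E) (mtr Rm)) (mmul d Rm (mmul d gram_inv (psi X)))) (C_of X)).
  { assert (Et : meq d (mtr E) (mexp d (mtr (mscale T X)))) by apply mtr_mexp.
    assert (Ee : meq d (mexp d (mscale (- T) (mtr X))) (mexp d (mopp (mtr (mscale T X)))))
      by (apply mexp_proper; entrywise; ring).
    assert (Hc : meq d (mmul d (mtr Rm) Rm) (mmul d Rm (mtr Rm)))
      by (apply (bicommutant_commute d L HL); [apply bicommutant_mtr|]; apply bicommutant_Rm).
    unfold psi. rewrite mmul_assoc, <- (mmul_assoc d (mtr Rm)), Hc.
    rewrite <- (mmul_assoc d (mmul d Rm (mtr Rm))), gram_mmul_gram_inv, mmul_1_l, <- mmul_assoc, Et, Ee.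
    now rewrite mexp_mopp_r, mmul_1_l. }
  rewrite H2. entrywise. ring.
Qed.


Definition norm_L_T : R := mnorm d L / T.
Definition bound_exp : R := INR d + exp T.
Definition norm_gram_inv : R := mnorm d gram_inv.
Definition lip_psi : R := bound_exp * (T * exp (2 * T) * (norm_L_T + 1) + 1).
Definition lip_param : R := norm_gram_inv * bound_exp * (norm_L_T + 1) / T.

Lemma norm_L_T_nonneg : 0 <= norm_L_T.
Proof. apply Rdiv_le_0_compat; [apply mnorm_nonneg|exact HT]. Qed.

Lemma bound_exp_ge_1 : 1 <= bound_exp.
Proof. unfold bound_exp. generalize (pos_INR d) (exp_ge_1 T (Rlt_le _ _ HT)). lra. Qed.

Lemma lip_psi_nonneg : 0 <= lip_psi.
Proof.
  unfold lip_psi. generalize bound_exp_ge_1 norm_L_T_nonneg (exp_pos (2 * T)). intros.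
  apply Rmult_le_pos; [lra|]. assert (0 <= T * exp (2 * T) * (norm_L_T + 1)) by
    (repeat apply Rmult_le_pos; lra). lra.
Qed.

Lemma lip_param_nonneg : 0 <= lip_param.
Proof.
  unfold lip_param. generalize bound_exp_ge_1 norm_L_T_nonneg (mnorm_nonneg d gram_inv). intros.
  apply Rdiv_le_0_compat; [|exact HT]. unfold norm_gram_inv. repeat apply Rmult_le_pos; lra.
Qed.

Lemma mnorm_C_of X : mnorm d (C_of X) <= norm_L_T + mnorm d X.
Proof.
  eapply Rle_trans; [apply mnorm_madd|]. rewrite mnorm_mscale, Rabs_pos_eq.
  - unfold norm_L_T, Rdiv. lra.
  - left. apply Rinv_0_lt_compat, HT.
Qed.

Lemma mnorm_exp_mtr X : mnorm d X <= 1 -> mnorm d (mexp d (mscale (- T) (mtr X))) <= bound_exp.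
Proof.
  intros H. eapply Rle_trans; [apply mnorm_mexp|].
  rewrite mnorm_mscale, mnorm_mtr, Rabs_Ropp, Rabs_pos_eq by lra. unfold bound_exp.
  assert (exp (T * mnorm d X) <= exp T) by (apply exp_le; generalize (mnorm_nonneg d X); nra).
  lra.
Qed.

Lemma mnorm_psi X : mnorm d X <= 1 -> mnorm d (psi X) <= bound_exp * (norm_L_T + 1).
Proof.
  intros H. eapply Rle_trans; [apply mnorm_mmul|].
  apply Rmult_le_compat; try apply mnorm_nonneg; [apply mnorm_exp_mtr, H|].
  generalize (mnorm_C_of X). lra.
Qed.

Lemma mnorm_exp_mtr_msub X Y : bicommutant d L X -> bicommutant d L Y ->
  mnorm d X <= 1 -> mnorm d Y <= 1 ->
  mnorm d (msub (mexp d (mscale (- T) (mtr X))) (mexp d (mscale (- T) (mtr Y))))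
  <= bound_exp * (T * exp (2 * T)) * mnorm d (msub X Y).
Proof.
  intros HX HY HnX HnY.
  set (h := mnorm d (msub X Y)). assert (Hh : 0 <= h) by apply mnorm_nonneg.
  assert (Hh2 : h <= 2) by (unfold h; generalize (mnorm_msub d X Y); lra).
  eapply Rle_trans; [apply mnorm_mexp_msub|].
  - apply (bicommutant_commute d L HL); apply bicommutant_mscale, bicommutant_mtr; assumption.
  - assert (E : meq d (msub (mscale (- T) (mtr X)) (mscale (- T) (mtr Y))) (mscale (- T) (mtr (msub X Y))))
      by (entrywise; ring).
    rewrite E, mnorm_mscale, mnorm_mtr, Rabs_Ropp, Rabs_pos_eq by lra. fold h.
    assert (He : exp (T * h) - 1 <= T * exp (2 * T) * h).
    { eapply Rle_trans; [apply exp_sub_1_le; nra|].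
      replace (T * exp (2 * T) * h) with (T * h * exp (2 * T)) by ring.
      apply Rmult_le_compat_l; [nra|apply exp_le; nra]. }
    rewrite Rmult_assoc. apply Rmult_le_compat; [apply mnorm_nonneg| |apply mnorm_exp_mtr, HnY|].
    + generalize (exp_ge_1 (T * h) ltac:(nra)). lra.
    + lra.
Qed.

Lemma mnorm_psi_msub X Y : bicommutant d L X -> bicommutant d L Y ->
  mnorm d X <= 1 -> mnorm d Y <= 1 ->
  mnorm d (msub (psi X) (psi Y)) <= lip_psi * mnorm d (msub X Y).
Proof.
  intros HX HY HnX HnY. set (eX := mexp d (mscale (- T) (mtr X))). set (eY := mexp d (mscale (- T) (mtr Y))).
  assert (E : meq d (msub (psi X) (psi Y)) (madd (mmul d (msub eX eY) (C_of X)) (mmul d eY (msub X Y)))).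
  { assert (E1 : meq d (msub X Y) (msub (C_of X) (C_of Y))) by (unfold C_of; entrywise; ring).
    unfold psi. fold eX eY. rewrite E1, mmul_msub_distr_r, mmul_msub_distr_l. entrywise. ring. }
  rewrite E. eapply Rle_trans; [apply mnorm_madd|].
  eapply Rle_trans; [apply Rplus_le_compat; apply mnorm_mmul|].
  generalize (mnorm_exp_mtr_msub X Y HX HY HnX HnY) (mnorm_exp_mtr Y HnY) (mnorm_C_of X)
    (mnorm_nonneg d (msub eX eY)) (mnorm_nonneg d (C_of X)) (mnorm_nonneg d eY)
    (mnorm_nonneg d (msub X Y)) bound_exp_ge_1 norm_L_T_nonneg (exp_pos (2 * T)).
  fold eX eY. intros H1 H2 H3 H4 H5 H6 H7 H8 H9 H10. unfold lip_psi.
  apply Rle_trans with (bound_exp * (T * exp (2 * T)) * mnorm d (msub X Y) * (norm_L_T + 1)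
                        + bound_exp * mnorm d (msub X Y)).
  - apply Rplus_le_compat; apply Rmult_le_compat; lra.
  - right. ring.
Qed.

Lemma mnorm_gram_psi_msub lam X Y : 0 <= lam -> bicommutant d L X -> bicommutant d L Y ->
  mnorm d X <= 1 -> mnorm d Y <= 1 ->
  mnorm d (msub (mscale lam (mmul d gram_inv (psi X))) (mscale lam (mmul d gram_inv (psi Y))))
  <= lam * (norm_gram_inv * lip_psi) * mnorm d (msub X Y).
Proof.
  intros Hl HX HY HnX HnY.
  assert (E : meq d (msub (mscale lam (mmul d gram_inv (psi X))) (mscale lam (mmul d gram_inv (psi Y))))
                    (mscale lam (mmul d gram_inv (msub (psi X) (psi Y)))))
    by (rewrite mmul_msub_distr_l; entrywise; ring).
  rewrite E, mnorm_mscale, Rabs_pos_eq, !Rmult_assoc by lra. apply Rmult_le_compat_l; [lra|].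
  eapply Rle_trans; [apply mnorm_mmul|]. apply Rmult_le_compat_l; [apply mnorm_nonneg|].
  apply mnorm_psi_msub; assumption.
Qed.

Lemma mnorm_exp_rem_scale_msub rho X Y : bicommutant d L X -> bicommutant d L Y ->
  mnorm d X <= rho -> mnorm d Y <= rho -> rho <= 1 ->
  mnorm d (msub (exp_rem d (mscale T X)) (exp_rem d (mscale T Y)))
  <= 3 * T ^ 2 * rho * exp (3 * T) * mnorm d (msub X Y).
Proof.
  intros HX HY HnX HnY Hrho. eapply Rle_trans; [apply mnorm_exp_rem_msub|].
  - apply (bicommutant_commute d L HL); apply bicommutant_mscale; assumption.
  - assert (E : meq d (msub (mscale T X) (mscale T Y)) (mscale T (msub X Y))) by (entrywise; ring).
    rewrite E, !mnorm_mscale, Rabs_pos_eq by lra.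
    assert (mnorm d (msub X Y) <= 2 * rho) by (generalize (mnorm_msub d X Y); lra).
    set (h := mnorm d (msub X Y)) in *. set (y := mnorm d Y) in *.
    assert (0 <= h) by apply mnorm_nonneg. assert (0 <= y) by apply mnorm_nonneg.
    assert (Hs : T * y + T * h <= 3 * T * rho) by nra.
    assert (exp (T * y + T * h) <= exp (3 * T)) by (apply exp_le; nra).
    replace (3 * T ^ 2 * rho * exp (3 * T) * h) with (T * h * (3 * T * rho) * exp (3 * T)) by ring.
    apply Rmult_le_compat; [| |apply Rmult_le_compat_l; nra|assumption].
    + apply Rmult_le_pos; nra.
    + left; apply exp_pos.
Qed.

Lemma mnorm_char_map_msub lam mu X Y :
  mnorm d (msub (char_map lam X) (char_map mu Y)) <=
  / T * (mnorm d (msub (mscale lam (mmul d gram_inv (psi X))) (mscale mu (mmul d gram_inv (psi Y))))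
         + mnorm d (msub (exp_rem d (mscale T X)) (exp_rem d (mscale T Y)))).
Proof.
  assert (E : meq d (msub (char_map lam X) (char_map mu Y))
    (mscale (/ T) (mopp (madd (msub (mscale lam (mmul d gram_inv (psi X))) (mscale mu (mmul d gram_inv (psi Y))))
                             (msub (exp_rem d (mscale T X)) (exp_rem d (mscale T Y))))))).
  { unfold char_map. entrywise. ring. }
  rewrite E, mnorm_mscale, mnorm_mopp, Rabs_pos_eq by (left; apply Rinv_0_lt_compat, HT).
  apply Rmult_le_compat_l; [left; apply Rinv_0_lt_compat, HT|apply mnorm_madd].
Qed.

Lemma mnorm_char_map_param lam mu X : mnorm d X <= 1 ->
  mnorm d (msub (char_map lam X) (char_map mu X)) <= lip_param * Rabs (lam - mu).
Proof.
  intros HX. eapply Rle_trans; [apply mnorm_char_map_msub|].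
  assert (E1 : meq d (msub (exp_rem d (mscale T X)) (exp_rem d (mscale T X))) mzero) by (entrywise; ring).
  assert (E2 : meq d (msub (mscale lam (mmul d gram_inv (psi X))) (mscale mu (mmul d gram_inv (psi X))))
                     (mscale (lam - mu) (mmul d gram_inv (psi X)))) by (entrywise; ring).
  rewrite E1, E2, mnorm_mzero, Rplus_0_r, mnorm_mscale.
  assert (H : mnorm d (mmul d gram_inv (psi X)) <= norm_gram_inv * (bound_exp * (norm_L_T + 1))).
  { eapply Rle_trans; [apply mnorm_mmul|].
    apply Rmult_le_compat_l; [apply mnorm_nonneg|apply mnorm_psi, HX]. }
  unfold lip_param.
  apply Rle_trans with (/ T * (Rabs (lam - mu) * (norm_gram_inv * (bound_exp * (norm_L_T + 1))))).
  - apply Rmult_le_compat_l; [left; apply Rinv_0_lt_compat, HT|].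
    apply Rmult_le_compat_l; [apply Rabs_pos|exact H].
  - right. field. lra.
Qed.


Lemma char_map_mzero lam : meq d (char_map lam mzero) (mscale (- (lam / T ^ 2)) (mmul d gram_inv L)).
Proof.
  assert (E : meq d (exp_rem d (mscale T mzero)) mzero).
  { assert (Hz : meq d (mscale T mzero) mzero) by (entrywise; ring).
    unfold exp_rem. rewrite Hz, mexp_mzero. entrywise. ring. }
  assert (Hpsi : meq d (psi mzero) (mscale (/ T) L)).
  { unfold psi, C_of. assert (Hz : meq d (mscale (- T) (mtr mzero)) mzero) by (entrywise; ring).
    rewrite Hz, mexp_mzero, mmul_1_l. entrywise. ring. }
  unfold char_map. rewrite E, Hpsi, mmul_mscale_r. entrywise. field. lra.
Qed.

Lemma char_map_0_mzero : meq d (char_map 0 mzero) mzero.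
Proof. rewrite char_map_mzero. entrywise. field. lra. Qed.

Definition radius : R := Rmin 1 (/ (12 * T * exp (3 * T))).

Definition delta : R :=
  Rmin (T / (4 * (norm_gram_inv * lip_psi + 1))) (radius / (2 * (lip_param + 1))).

Lemma radius_pos : 0 < radius.
Proof.
  apply Rmin_pos; [lra|]. apply Rinv_0_lt_compat.
  generalize (exp_pos (3 * T)). intros. repeat apply Rmult_lt_0_compat; lra.
Qed.

Lemma radius_le_1 : radius <= 1.
Proof. apply Rmin_l. Qed.

Lemma radius_small : 3 * T ^ 2 * radius * exp (3 * T) <= T / 4.
Proof.
  assert (H := Rmin_r 1 (/ (12 * T * exp (3 * T)))). fold radius in H.
  assert (He := exp_pos (3 * T)).
  assert (Hp : 0 < 12 * T * exp (3 * T)) by (repeat apply Rmult_lt_0_compat; lra).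
  apply Rle_trans with (3 * T ^ 2 * exp (3 * T) * / (12 * T * exp (3 * T))).
  - replace (3 * T ^ 2 * radius * exp (3 * T)) with (3 * T ^ 2 * exp (3 * T) * radius) by ring.
    apply Rmult_le_compat_l; [|exact H]. assert (0 < T ^ 2) by nra. nra.
  - right. field. lra.
Qed.

Lemma delta_pos : 0 < delta.
Proof.
  generalize (mnorm_nonneg d gram_inv) lip_psi_nonneg lip_param_nonneg radius_pos.
  fold norm_gram_inv. intros. assert (0 <= norm_gram_inv * lip_psi) by (apply Rmult_le_pos; lra).
  apply Rmin_pos; apply Rdiv_lt_0_compat; lra.
Qed.

Lemma delta_contraction lam : 0 <= lam <= delta -> lam * (norm_gram_inv * lip_psi) <= T / 4.
Proof.
  intros [H0 H1]. assert (Hd := Rmin_l (T / (4 * (norm_gram_inv * lip_psi + 1)))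
                                        (radius / (2 * (lip_param + 1)))).
  fold delta in Hd. assert (HK : 0 <= norm_gram_inv * lip_psi)
    by (apply Rmult_le_pos; [apply mnorm_nonneg|apply lip_psi_nonneg]).
  apply Rle_trans with (T / (4 * (norm_gram_inv * lip_psi + 1)) * (norm_gram_inv * lip_psi)).
  - apply Rmult_le_compat_r; lra.
  - apply Rmult_le_reg_r with (4 * (norm_gram_inv * lip_psi + 1) / T); [apply Rdiv_lt_0_compat; lra|].
    field_simplify; nra.
Qed.

Lemma delta_radius lam : 0 <= lam <= delta -> lam * lip_param <= radius / 2.
Proof.
  intros [H0 H1]. assert (Hd := Rmin_r (T / (4 * (norm_gram_inv * lip_psi + 1)))
                                        (radius / (2 * (lip_param + 1)))).
  fold delta in Hd. generalize lip_param_nonneg radius_pos. intros.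
  apply Rle_trans with (radius / (2 * (lip_param + 1)) * (lip_param + 1)).
  - apply Rmult_le_compat; lra.
  - right. field. lra.
Qed.

Lemma char_map_contraction lam X Y : 0 <= lam <= delta ->
  bicommutant d L X -> bicommutant d L Y -> mnorm d X <= radius -> mnorm d Y <= radius ->
  mnorm d (msub (char_map lam X) (char_map lam Y)) <= / 2 * mnorm d (msub X Y).
Proof.
  intros Hl HX HY HnX HnY. generalize radius_le_1. intros Hr1.
  eapply Rle_trans; [apply mnorm_char_map_msub|].
  set (h := mnorm d (msub X Y)). assert (Hh : 0 <= h) by apply mnorm_nonneg.
  assert (H1 : mnorm d (msub (mscale lam (mmul d gram_inv (psi X))) (mscale lam (mmul d gram_inv (psi Y))))
               <= T / 4 * h).
  { eapply Rle_trans; [apply mnorm_gram_psi_msub; auto; lra|].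
    apply Rmult_le_compat_r; [exact Hh|apply delta_contraction, Hl]. }
  assert (H2 : mnorm d (msub (exp_rem d (mscale T X)) (exp_rem d (mscale T Y))) <= T / 4 * h).
  { eapply Rle_trans; [apply (mnorm_exp_rem_scale_msub radius); auto|].
    apply Rmult_le_compat_r; [exact Hh|apply radius_small]. }
  apply Rle_trans with (/ T * (T / 4 * h + T / 4 * h)).
  - apply Rmult_le_compat_l; [left; apply Rinv_0_lt_compat, HT|lra].
  - right. field. lra.
Qed.

Lemma mnorm_msub_mzero A : mnorm d (msub A mzero) = mnorm d A.
Proof. apply mnorm_proper. entrywise. ring. Qed.

Lemma char_map_ball lam X : 0 <= lam <= delta ->
  bicommutant d L X -> mnorm d X <= radius -> mnorm d (char_map lam X) <= radius.
Proof.
  intros Hl HX HnX. generalize radius_pos radius_le_1 (delta_radius lam Hl). intros Hr0 Hr1 Hlr.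
  rewrite <- mnorm_msub_mzero.
  eapply Rle_trans; [apply (mnorm_msub_triang d _ (char_map lam mzero))|].
  assert (H1 := char_map_contraction lam X mzero Hl HX (bicommutant_mzero d L) HnX
                  ltac:(rewrite mnorm_mzero; lra)).
  assert (H2 := mnorm_char_map_param lam 0 mzero ltac:(rewrite mnorm_mzero; lra)).
  rewrite char_map_0_mzero, Rminus_0_r, Rabs_pos_eq in H2 by lra.
  rewrite mnorm_msub_mzero in H1. generalize (lip_param_nonneg). nra.
Qed.

Definition solution (lam : R) : Mat := fixpoint (char_map lam).

Lemma solution_spec lam : 0 <= lam <= delta ->
  (bicommutant d L (solution lam) /\ mnorm d (solution lam) <= radius) /\
  meq d (char_map lam (solution lam)) (solution lam).
Proof.
  intros Hl.
  assert (H0 : bicommutant d L mzero /\ mnorm d mzero <= radius)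
    by (split; [apply bicommutant_mzero|rewrite mnorm_mzero; left; apply radius_pos]).
  assert (Hg : forall X, bicommutant d L X /\ mnorm d X <= radius ->
                         bicommutant d L (char_map lam X) /\ mnorm d (char_map lam X) <= radius)
    by (intros X [HX HnX]; split; [apply bicommutant_char_map|apply char_map_ball]; assumption).
  assert (Hc : forall X Y, bicommutant d L X /\ mnorm d X <= radius -> bicommutant d L Y /\ mnorm d Y <= radius ->
             mnorm d (msub (char_map lam X) (char_map lam Y)) <= / 2 * mnorm d (msub X Y))
    by (intros X Y [HX HnX] [HY HnY]; apply char_map_contraction; assumption).
  split; [apply (ball_fixpoint d _ (bicommutant_mlim d L))|apply (fixpoint_eq d _ (bicommutant_mlim d L) radius)];
    assumption.
Qed.

Lemma mnorm_solution_msub lam mu : 0 <= lam <= delta -> 0 <= mu <= delta ->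
  mnorm d (msub (solution lam) (solution mu)) <= 2 * lip_param * Rabs (lam - mu).
Proof.
  intros Hl Hm. destruct (solution_spec lam Hl) as [[HX HnX] HfX].
  destruct (solution_spec mu Hm) as [[HY HnY] HfY].
  eapply Rle_trans; [apply (fixpoint_perturbation d _ _ _ _ HfX HfY)|].
  - apply char_map_contraction; assumption.
  - rewrite Rmult_assoc. apply Rmult_le_compat_l; [lra|].
    apply mnorm_char_map_param. generalize radius_le_1. lra.
Qed.

Lemma solution_0 : meq d (solution 0) mzero.
Proof.
  assert (Hd : 0 <= 0 <= delta) by (generalize delta_pos; lra).
  destruct (solution_spec 0 Hd) as [[HX HnX] HfX].
  apply meq_msub_0, mnorm_le_0.
  eapply Rle_trans; [apply (fixpoint_perturbation d _ _ _ _ HfX char_map_0_mzero)|].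
  - apply char_map_contraction; try assumption; [apply bicommutant_mzero|].
    rewrite mnorm_mzero. left. apply radius_pos.
  - assert (E : meq d (msub (char_map 0 mzero) (char_map 0 mzero)) mzero) by (entrywise; ring).
    rewrite E, mnorm_mzero. lra.
Qed.

Lemma mnorm_solution lam : 0 <= lam <= delta -> mnorm d (solution lam) <= 2 * lip_param * lam.
Proof.
  intros Hl. assert (Hd : 0 <= 0 <= delta) by (generalize delta_pos; lra).
  assert (H := mnorm_solution_msub lam 0 Hl Hd).
  rewrite solution_0, mnorm_msub_mzero, Rminus_0_r, Rabs_pos_eq in H by lra. exact H.
Qed.

Definition second_order_const : R :=
  2 * norm_gram_inv * lip_psi * lip_param / T + 12 * T * lip_param ^ 2 * exp (3 * T).

Lemma solution_second_order lam : 0 <= lam <= delta ->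
  mnorm d (madd (solution lam) (mscale (lam / T ^ 2) (mmul d gram_inv L))) <= second_order_const * lam ^ 2.
Proof.
  intros Hl. destruct (solution_spec lam Hl) as [[HX HnX] HfX].
  assert (Hx := mnorm_solution lam Hl). set (X := solution lam) in *.
  generalize radius_le_1 (mnorm_nonneg d X) (mnorm_nonneg d gram_inv) lip_psi_nonneg lip_param_nonneg.
  fold norm_gram_inv. intros Hr1 Hx0 HG HK2 HK3.
  assert (Hz : mnorm d mzero <= mnorm d X) by (rewrite mnorm_mzero; exact Hx0).
  assert (E : meq d (madd X (mscale (lam / T ^ 2) (mmul d gram_inv L)))
                    (msub (char_map lam X) (char_map lam mzero)))
    by (rewrite char_map_mzero, HfX; entrywise; ring).
  rewrite E. eapply Rle_trans; [apply mnorm_char_map_msub|].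
  assert (H1 := mnorm_gram_psi_msub lam X mzero ltac:(lra) HX (bicommutant_mzero d L)
                  ltac:(lra) ltac:(lra)).
  rewrite mnorm_msub_mzero in H1.
  assert (H2 : mnorm d (msub (exp_rem d (mscale T X)) (exp_rem d (mscale T mzero)))
               <= 3 * T ^ 2 * exp (3 * T) * mnorm d X ^ 2).
  { replace (3 * T ^ 2 * exp (3 * T) * mnorm d X ^ 2)
      with (3 * T ^ 2 * mnorm d X * exp (3 * T) * mnorm d (msub X mzero))
      by (rewrite mnorm_msub_mzero; ring).
    apply mnorm_exp_rem_scale_msub; [assumption|apply bicommutant_mzero|lra|lra|lra]. }
  assert (Hx2 : mnorm d X ^ 2 <= (2 * lip_param * lam) ^ 2) by (apply pow_incr; lra).
  apply Rle_trans with (/ T * (lam * (norm_gram_inv * lip_psi) * (2 * lip_param * lam)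
                              + 3 * T ^ 2 * exp (3 * T) * (2 * lip_param * lam) ^ 2)).
  - apply Rmult_le_compat_l; [left; apply Rinv_0_lt_compat, HT|].
    apply Rplus_le_compat.
    + eapply Rle_trans; [exact H1|]. apply Rmult_le_compat_l; [|exact Hx]. apply Rmult_le_pos; nra.
    + eapply Rle_trans; [exact H2|].
      apply Rmult_le_compat_l; [generalize (exp_pos (3 * T)); nra|exact Hx2].
  - right. unfold second_order_const. field. lra.
Qed.

Lemma C_of_solution_lipschitz lam mu i j : 0 <= lam <= delta -> 0 <= mu <= delta ->
  (i < d)%nat -> (j < d)%nat ->
  Rabs (C_of (solution lam) i j - C_of (solution mu) i j) <= 2 * lip_param * Rabs (lam - mu).
Proof.
  intros Hl Hm Hi Hj. eapply Rle_trans; [|apply mnorm_solution_msub; assumption].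
  replace (C_of (solution lam) i j - C_of (solution mu) i j)
    with (msub (solution lam) (solution mu) i j) by (unfold C_of; cbv [msub madd mopp mscale]; ring).
  apply Rabs_entry_le_mnorm; assumption.
Qed.

Lemma C_of_solution_0 : meq d (C_of (solution 0)) (mscale (/ T) L).
Proof. unfold C_of. rewrite solution_0. entrywise. ring. Qed.

Lemma C_of_solution_expansion lam i j : 0 <= lam <= delta -> (i < d)%nat -> (j < d)%nat ->
  Rabs (C_of (solution lam) i j
        - (mscale (/ T) L i j - mscale (lam / T ^ 2) (mmul d (minv d (mmul d Rm (mtr Rm))) L) i j))
  <= second_order_const * lam ^ 2.
Proof.
  intros Hl Hi Hj. eapply Rle_trans; [|apply solution_second_order, Hl].
  unfold mscale at 2. rewrite (mmul_proper d _ _ minv_gram _ _ (reflexivity L) i j Hi Hj).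
  replace (C_of (solution lam) i j - _)
    with (madd (solution lam) (mscale (lam / T ^ 2) (mmul d gram_inv L)) i j)
    by (unfold C_of; cbv [madd mscale]; ring).
  apply Rabs_entry_le_mnorm; assumption.
Qed.

End CharacteristicMap.

Theorem theorem2 (d : nat) (T : R) (Rm : Mat)
  (HT : 0 < T) (Hnormal : normal d Rm) (HP1 : P1 d Rm) :
  (* (i) *)
  (forall C : Mat, normal d C ->
     (char_eq d T 0 Rm C <-> meq d (mexp d (mscale T C)) Rm))
  /\
  (* (ii) *)
  (forall L : Mat, normal d L -> meq d (mexp d L) Rm ->
     exists (delta : R) (Cf : R -> Mat),
       0 < delta /\
       (* continuity on the neighborhood N = [0, delta) of 0 in R^+ *)
       (forall lam, 0 <= lam < delta ->
          forall i j, (i < d)%nat -> (j < d)%nat ->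
            limit1_in (fun l => Cf l i j) (fun l => 0 <= l < delta)
                      (Cf lam i j) lam) /\
       (forall lam, 0 <= lam < delta ->
          normal d (Cf lam) /\ char_eq d T lam Rm (Cf lam)) /\
       meq d (Cf 0) (mscale (/ T) L) /\
       (* C(lam) = L/T - lam/T^2 (R R^T)^{-1} L + O(lam^2) as lam -> 0+ *)
       (exists K eps : R, 0 < eps /\
          forall lam, 0 <= lam < eps ->
            forall i j, (i < d)%nat -> (j < d)%nat ->
              Rabs (Cf lam i j
                    - (mscale (/ T) L i j
                       - mscale (lam / T ^ 2)
                           (mmul d (minv d (mmul d Rm (mtr Rm))) L) i j))
              <= K * lam ^ 2)).
Proof.
  split.
  - intros C HC. exact (char_eq_0_iff d T Rm C HC).
  - intros L HL HR.
    set (Cf lam := C_of L T (solution d L T lam)).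
    assert (Hd := delta_pos d L T HT).
    exists (delta d L T), Cf. split; [exact Hd|]. split; [|split; [|split]].
    + intros lam Hl i j Hi Hj.
      apply (limit1_in_lipschitz (fun l => Cf l i j) _ (2 * lip_param d L T)).
      * generalize (lip_param_nonneg d L T HT). lra.
      * intros mu Hm. apply (C_of_solution_lipschitz d L T HL HT); auto; lra.
    + intros lam Hl. assert (Hl' : 0 <= lam <= delta d L T) by lra.
      destruct (solution_spec d L T HL HT lam Hl') as [[HX _] Hfix]. split.
      * apply (bicommutant_normal d L HL), bicommutant_C_of, HX.
      * apply (char_eq_of_fixpoint d L T Rm HL HT HR); assumption.
    + apply (C_of_solution_0 d L T HL HT).
    + exists (second_order_const d L T), (delta d L T). split; [exact Hd|].
      intros lam Hl i j Hi Hj. apply (C_of_solution_expansion d L T Rm HL HT HR); auto; lra.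
Qed.
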